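(* For all $n\ge2$, $B(n)=a(n-2)+2$.
   Context: $\mathbb{N}=\{0,1,2,\dots\}$. Quet's sequence $A:\mathbb{N}\to\mathbb{N}$ is defined by $A(0)=0$, $A(1)=1$, and for $n\ge1$, $A(n+1)$ is the least natural number such that $A(n+1)\notin\{A(0),\dots,A(n)\}$ and $\sum_{0\le i\le n+1}A(i)\equiv 0 \pmod{n}$. Define $B(0)=0$, $B(1)=1$, and $B(n)=\frac{1}{n-1}\sum_{0\le i\le n}A(i)$ for $n\ge2$ (an integer by the defining congruence); first values $B=0,1,3,3,4,4,5,5,6,7,7,\dots$. Hofstadter's ''married'' sequences $a,b:\mathbb{N}\to\mathbb{N}$ are defined by $a(0)=1$, $b(0)=0$ and, for $n\ge1$, $b(n)=n-a(b(n-1))$ and $a(n)=n-b(a(n-1))$ (computing $b(n)$ before $a(n)$ at each step); first values $a=1,1,2,2,3,3,4,5,5,6,6,\dots$. *)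

From mathcomp Require Import all_boot.
Set Implicit Arguments. Unset Strict Implicit. Unset Printing Implicit Defensive.

(* Given s = [:: A 0; ...; A m] (m >= 1), the value A (m+1) is the least
   natural number x with x \notin s and (sumn s + x) = 0 mod m.
   The search range [0, (m+2)^2) is sufficient: the admissible residue class
   r mod m (r < m) contains the m+2 numbers r, r+m, ..., r+(m+1)m, all
   < m(m+2) <= (m+2)^2, and at most m+1 of them occur in s.  Hence the head of
   the filtered list below is exactly the least admissible number. *)
Definition quet_next (m : nat) (s : seq nat) : nat :=
  head 0 [seq x <- iota 0 ((m.+2) * (m.+2)) |
           (x \notin s) && ((sumn s + x) %% m == 0)].

Fixpoint quet_upto (n : nat) : seq nat :=
  match n with
  | 0 => [:: 0]
  | 1 => [:: 0; 1]
  | (k.+1 as m).+1 => let s := quet_upto m in rcons s (quet_next m s)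
  end.

Definition quetA (n : nat) : nat := nth 0 (quet_upto n) n.

Definition quetB (n : nat) : nat :=
  if n < 2 then n else (\sum_(0 <= i < n.+1) quetA i) %/ (n - 1).

Fixpoint hof_upto (n : nat) : seq nat * seq nat :=
  match n with
  | 0 => ([:: 1], [:: 0])
  | m.+1 =>
      let (la, lb) := hof_upto m in
      let bn := m.+1 - nth 0 la (nth 0 lb m) in
      let lb' := rcons lb bn in
      let an := m.+1 - nth 0 lb' (nth 0 la m) in
      (rcons la an, lb')
  end.

Definition hof_a (n : nat) : nat := nth 0 (hof_upto n).1 n.
Definition hof_b (n : nat) : nat := nth 0 (hof_upto n).2 n.

From mathcomp Require Import all_boot zify.

(* Both sides obey one self-referential growth rule ([grows] below): f(n+1) is
   f(n) + 1 when f(n) = f(n-1), or when f(n) = f(j) + j + 2 for some j < n at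
   which f increased, and f(n+1) = f(n) otherwise.  A sequence obeying the rule
   from some index on is determined by its initial values ([grows_uniq]).

   Hofstadter side: b(i) is the least w with i <= w + a(w), and a(i) the least
   w >= 1 with i <= w + b(w) (record [adjoint_at], established for both
   sequences by one joint induction).  Hence a and b increase by steps 0 or 1,
   b repeats a value exactly at the second point of a block
   {m + a(m) + 1, m + a(m) + 2} where a increases at m ([b_flat]), and the
   recursion a(n+1) = n+1 - b(a(n)) becomes the growth rule ([a_rule]).

   Quet side: for n >= 5 the invariant [quet_inv] describes {A(0), ..., A(n)}:
   the numbers below B(n) (and B(n) itself if B(n) = B(n-1)) together with the
   "jump values" B(k) + k for the k where B increased.  The congruence then
   forces A(n+1) = B(n) if B(n) is unused and A(n+1) = B(n) + n otherwise, so
   B(n+1) = B(n) + [B(n) is used] ([quetB_rule]) and c(m) = B(m+2) - 2 obeys the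
   growth rule ([quet_shift_rule]).  Since c and a both start 1, 1, 2, 2, they
   coincide, which is the theorem. *)

Set Implicit Arguments.
Unset Strict Implicit.
Unset Printing Implicit Defensive.

Definition grows (f : nat -> nat) (n : nat) : bool :=
  (f n == f n.-1) ||
  has (fun j => (f j.+1 == (f j).+1) && (f n == f j + j + 2)) (iota 0 n).

Lemma grows_ext (f g : nat -> nat) n :
  (forall i, i <= n -> f i = g i) -> grows f n = grows g n.
Proof.
move=> Efg; rewrite /grows !Efg ?leq_pred //; congr (_ || _).
apply: eq_in_has => j; rewrite mem_iota add0n => /andP [_ Hj].
by rewrite !Efg // ltnW.
Qed.

Lemma grows_uniq (f g : nat -> nat) n0 :
  (forall i, i <= n0 -> f i = g i) ->
  (forall n, n0 <= n -> f n.+1 = f n + grows f n) ->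
  (forall n, n0 <= n -> g n.+1 = g n + grows g n) ->
  forall n, f n = g n.
Proof.
move=> Einit Hf Hg n.
suff Eupto : forall i, i <= n -> f i = g i by exact: Eupto.
elim: n => [|n IH] i; first by rewrite leqn0 => /eqP ->; apply: Einit.
rewrite leq_eqVlt => /orP [/eqP ->|]; last exact: IH.
have [|n0n] := leqP n.+1 n0; first exact: Einit.
by rewrite ltnS in n0n; rewrite Hf // Hg // IH // (grows_ext IH).
Qed.

(* For a nondecreasing f the bound j < n in the rule is automatic. *)
Lemma has_jumpP (f : nat -> nat) n : {homo f : i j / i <= j} ->
  reflect (exists j, f j.+1 = (f j).+1 /\ f n = f j + j + 2)
          (has (fun j => (f j.+1 == (f j).+1) && (f n == f j + j + 2)) (iota 0 n)).
Proof.
move=> Hmono; apply: (iffP hasP) => [[j _ /andP [/eqP H1 /eqP H2]]|[j [H1 H2]]].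
  by exists j.
exists j; last by rewrite H1 H2 !eqxx.
by rewrite mem_iota add0n; case: ltnP => // /Hmono; lia.
Qed.

Local Notation a := hof_a.
Local Notation b := hof_b.

Lemma hof_upto_S n :
  let: (la, lb) := hof_upto n in
  let bn := n.+1 - nth 0 la (nth 0 lb n) in
  hof_upto n.+1 = (rcons la (n.+1 - nth 0 (rcons lb bn) (nth 0 la n)), rcons lb bn).
Proof. by rewrite /=; case: (hof_upto n). Qed.

Lemma hof_size n : size (hof_upto n).1 = n.+1 /\ size (hof_upto n).2 = n.+1.
Proof.
elim: n => [|n]; first by [].
have := hof_upto_S n; case: (hof_upto n) => la lb /= -> [Ha Hb].
by rewrite !size_rcons Ha Hb.
Qed.

Lemma hof_prefix n i : i <= n ->
  nth 0 (hof_upto n).1 i = a i /\ nth 0 (hof_upto n).2 i = b i.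
Proof.
elim: n => [|n IH]; first by rewrite leqn0 => /eqP ->.
rewrite leq_eqVlt => /orP [/eqP -> //|Hi].
have := hof_upto_S n; have := hof_size n; have := IH Hi.
by case: (hof_upto n) => la lb /= [<- <-] [Ha Hb] ->; rewrite !nth_rcons Ha Hb Hi.
Qed.

Lemma hof_rec_raw n : b n.+1 = n.+1 - nth 0 (hof_upto n).1 (b n) /\
  a n.+1 = n.+1 - nth 0 (hof_upto n.+1).2 (a n).
Proof.
have [Ea Eb] := hof_prefix (leqnn n); rewrite -Ea -Eb /hof_a /hof_b.
have := hof_upto_S n; have := hof_size n.
by case: (hof_upto n) => la lb /= [Ha Hb] ->; rewrite /= !nth_rcons Ha Hb ltnn eqxx.
Qed.

(* The arguments a(n), b(n) fed back into the recursion are in range. *)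
Lemma hof_le n : b n <= n /\ a n <= n.+1.
Proof. by case: n => [|n] //; rewrite (hof_rec_raw n).1 (hof_rec_raw n).2; lia. Qed.

Lemma hofb_S n : b n.+1 = n.+1 - a (b n).
Proof. by rewrite (hof_rec_raw n).1; have [-> _] := hof_prefix (hof_le n).1. Qed.

Lemma hofa_S n : a n.+1 = n.+1 - b (a n).
Proof. by rewrite (hof_rec_raw n).2; have [_ ->] := hof_prefix (hof_le n).2. Qed.

(* f(i) is the least w >= f(0) with i <= w + g(w), and f moves by 0 or 1 at i.
   This holds for (f, g) = (b, a) and (a, b). *)
Record adjoint_at (f g : nat -> nat) (i : nat) : Prop := AdjointAt {
  above_base : f 0 <= f i;
  slow_at : 0 < i -> f i.-1 <= f i <= (f i.-1).+1;
  cover_at : i <= f i + g (f i);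
  least_at : f i = f 0 \/ (f i).-1 + g (f i).-1 < i }.

Lemma adjoint_succ (f g : nat -> nat) q :
  f q.+1 = q.+1 - g (f q) ->
  f 0 + g (f 0) <= 1 ->
  (0 < f q -> g (f q) <= (g (f q).-1).+1) ->
  (f q + g (f q) = q -> g (f q) <= g (f q).+1) ->
  adjoint_at f g q -> adjoint_at f g q.+1.
Proof.
move=> Hrec Hbase Hslow Hnext [Hbot _ Hcov Hleast].
set k := f q in Hrec Hslow Hnext Hbot Hcov Hleast *.
have Hup : k + g k <= q.+1.
  case: Hleast => [Hk|Hlt]; first by rewrite Hk; lia.
  have [k0|kpos] := posnP k; first by move: Hlt; rewrite k0 /=; lia.
  by have := Hslow kpos; lia.
have [Hq1|Hq] : k + g k = q.+1 \/ k + g k = q by lia.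
- have Hf : f q.+1 = k by lia.
  by split; rewrite Hf //= -/k; lia.
- have Hf : f q.+1 = k.+1 by lia.
  by have := Hnext Hq; split; rewrite Hf //= -/k; lia.
Qed.

(* Joint induction: b at n+1 needs a up to n, and a at n+1 needs b up to n+1. *)
Lemma hof_adjoint_upto n :
  forall i, i <= n -> adjoint_at b a i /\ adjoint_at a b i.
Proof.
elim: n => [|n IH] i.
  by rewrite leqn0 => /eqP ->; split; split => //; left.
rewrite leq_eqVlt => /orP [/eqP ->|]; last exact: IH.
have Hb : adjoint_at b a n.+1.
  have [Ha_pos Ha_slow _ _] := (IH _ (hof_le n).1).2.
  have a0 : a 0 = 1 := erefl.
  apply: adjoint_succ => //; [exact: hofb_S | | | exact: (IH n (leqnn n)).1].
  - by move=> /Ha_slow /andP [].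
  - move=> Hn; have [_ Hs _ _] := (IH (b n).+1 (ltac:(lia))).2.
    by case/andP: (Hs isT).
have Hb_upto j : j <= n.+1 -> adjoint_at b a j.
  by rewrite leq_eqVlt => /orP [/eqP ->|/IH []].
have [_ Hb_slow _ _] := Hb_upto _ (hof_le n).2.
split=> //; apply: adjoint_succ => //.
- exact: hofa_S.
- by move=> /Hb_slow /andP [].
- move=> Hn; have [_ Hs _ _] := Hb_upto (a n).+1 (ltac:(lia)).
  by case/andP: (Hs isT).
- exact: (IH n (leqnn n)).2.
Qed.

Lemma hof_adjoint i : adjoint_at b a i /\ adjoint_at a b i.
Proof. exact: hof_adjoint_upto (leqnn i). Qed.

Lemma a_slow n : a n <= a n.+1 <= (a n).+1.
Proof. exact: slow_at (hof_adjoint n.+1).2 isT. Qed.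

Lemma b_slow n : b n <= b n.+1 <= (b n).+1.
Proof. exact: slow_at (hof_adjoint n.+1).1 isT. Qed.

Lemma a_pos n : 0 < a n.
Proof. exact: above_base (hof_adjoint n).2. Qed.

Lemma a_mono : {homo a : i j / i <= j}.
Proof.
by apply: homo_leq => [//|y x z|i]; [exact: leq_trans | case/andP: (a_slow i)].
Qed.

Lemma b_gal p w : p <= w + a w -> (w = 0 \/ w.-1 + a w.-1 < p) -> b p = w.
Proof.
move=> Hcov Hleast; have [_ _ Gcov Gleast] := (hof_adjoint p).1.
case: (ltngtP (b p) w) => // [lt|gt].
- have /a_mono : b p <= w.-1 by lia.
  by case: Hleast => [w0|]; [move: lt; rewrite w0 | lia].
- have /a_mono : w <= (b p).-1 by lia.
  by case: Gleast => [b0|]; [move: gt; rewrite b0 | lia].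
Qed.

(* b takes the value m+1 on the block [m + a(m) + 1, m+1 + a(m+1)], so it
   repeats a value exactly at the second point of a block of length two. *)
Lemma b_flat v : 2 <= v ->
  b v = b v.-1 <-> exists m, a m.+1 = (a m).+1 /\ v = a m + m + 2.
Proof.
move=> v2; split.
- move=> Hflat; have [_ _ Hcov Hleast] := (hof_adjoint v).1.
  have [_ _ _ Hleast'] := (hof_adjoint v.-1).1; rewrite -Hflat in Hleast'.
  have b0 : b 0 = 0 := erefl; have a0 : a 0 = 1 := erefl.
  have w0 : 0 < b v by case: (posnP (b v)) Hcov => // ->; rewrite a0; lia.
  by exists (b v).-1; have := a_slow (b v).-1; rewrite prednK //; lia.
- move=> [m [Hm ->]].
  by rewrite !(@b_gal _ m.+1) //= ?Hm; lia.
Qed.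

Lemma a_rule n : 1 <= n -> a n.+1 = a n + grows a n.
Proof.
case: n => [//|q] _; rewrite /grows; change (q.+1.-1) with q.
set u := a q; set v := a q.+1.
have Hv : v = q.+1 - b u by rewrite /v hofa_S.
have Hw : a q.+2 = q.+2 - b v by rewrite hofa_S.
have bu : b u <= q.+1 by have := (hof_le u).1; have := (hof_le q).2; lia.
case: (eqVneq v u) => [Evu|Nvu]; first by rewrite Hw Evu /=; lia.
have Evu : v = u.+1 by have := a_slow q; rewrite -/u -/v; lia.
have v2 : 2 <= v by have := a_pos q; rewrite -/u; lia.
have Hflat : (b v == b u) =
    has (fun j => (a j.+1 == (a j).+1) && (v == a j + j + 2)) (iota 0 q.+1).
  have [Hto Hfrom] := b_flat v2; have Eu : u = v.-1 by rewrite Evu.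
  by apply/eqP/(has_jumpP q.+1 a_mono); rewrite Eu; [exact: Hto | exact: Hfrom].
have := b_slow u; rewrite orFb -Evu -Hflat Hw Hv.
by case: eqP => /=; lia.
Qed.

Lemma quet_upto_S n : 1 <= n ->
  quet_upto n.+1 = rcons (quet_upto n) (quet_next n (quet_upto n)).
Proof. by case: n. Qed.

Lemma quet_size n : size (quet_upto n) = n.+1.
Proof.
elim: n => [|n IH] //; case: n IH => [|n] IH //.
by rewrite quet_upto_S // size_rcons IH.
Qed.

Lemma quet_prefix n i : i <= n -> nth 0 (quet_upto n) i = quetA i.
Proof.
elim: n => [|n IH]; first by rewrite leqn0 => /eqP ->.
rewrite leq_eqVlt => /orP [/eqP -> //|Hi].
case: n IH Hi => [|n] IH; first by rewrite ltnS leqn0 => /eqP ->.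
by move=> Hi; rewrite quet_upto_S // nth_rcons quet_size Hi IH.
Qed.

Lemma quetB_sum n : 2 <= n -> quetB n = sumn (quet_upto n) %/ n.-1.
Proof.
move=> n2; rewrite /quetB ltnNge n2 subn1 /=; congr (_ %/ _).
have -> : quet_upto n = [seq quetA i | i <- iota 0 n.+1].
  apply: (@eq_from_nth _ 0) => [|i]; rewrite ?size_map ?size_iota quet_size // => Hi.
  by rewrite (nth_map 0) ?size_iota // nth_iota // add0n quet_prefix.
by rewrite sumnE big_map.
Qed.

Lemma quet5 : quet_upto 5 = [:: 0; 1; 2; 3; 6; 4].
Proof. by vm_compute. Qed.

Lemma quetB_init : [/\ quetB 2 = 3, quetB 3 = 3, quetB 4 = 4 & quetB 5 = 4].
Proof. by split; rewrite quetB_sum //; vm_compute. Qed.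

Lemma modn_shift_eq0 n B x : 0 < B < n -> x <= B + n ->
  ((n.-1 * B + x) %% n == 0) = (x == B) || (x == B + n).
Proof.
move=> HB Hx.
have -> : n.-1 * B + x = B.-1 * n + (n - B + x) by nia.
rewrite modnMDl; have [Hlt|Hge] := ltnP x B; first by rewrite modn_small; lia.
have -> : n - B + x = (x - B) + n by lia.
rewrite modnDr; have [Hlt'|Hge'] := ltnP (x - B) n; first by rewrite modn_small; lia.
have -> : x - B = n by lia.
by rewrite modnn; lia.
Qed.

Lemma head_filter_iota (P : pred nat) m N x : m <= x < m + N -> P x ->
  (forall y, m <= y < x -> ~~ P y) -> head 0 [seq y <- iota m N | P y] = x.
Proof.
elim: N m => [|N IH] m Hx Px Hbelow /=; first by lia.
case: (eqVneq m x) => [-> | Nmx]; first by rewrite Px.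
rewrite (negbTE (Hbelow m _)); last by lia.
by apply: IH => // [|y Hy]; [lia | apply: Hbelow; lia].
Qed.

Lemma quet_next_eq n s B : 0 < B < n -> sumn s = n.-1 * B -> B + n \notin s ->
  quet_next n s = if B \in s then B + n else B.
Proof.
move=> HB Hsum Hfree.
have Hmod y : y <= B + n -> ((sumn s + y) %% n == 0) = (y == B) || (y == B + n).
  by move=> Hy; rewrite Hsum modn_shift_eq0.
rewrite /quet_next; case: ifPn => Hin; apply: head_filter_iota.
- by rewrite /=; nia.
- by rewrite Hfree Hmod // eqxx orbT.
- move=> y Hy; case: (eqVneq y B) => [-> | NyB]; first by rewrite Hin.
  by rewrite Hmod; [apply/negP => /andP [_]; rewrite (negbTE NyB) /=; lia | lia].
- by rewrite /=; nia.
- by rewrite Hin Hmod ?eqxx //; lia.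
- by move=> y Hy; rewrite Hmod; [apply/negP => /andP [_ /orP []]; lia | lia].
Qed.

Local Notation B := quetB.

(* The used values below B(n) are exactly those below [small_bound n]. *)
Definition small_bound n : nat := B n + (B n == B n.-1).

Definition jump_values n x : bool :=
  has (fun k => (B k.+1 == (B k).+1) && (x == B k + k)) (index_iota 2 n).

Lemma jump_values_S n x : 2 <= n ->
  jump_values n.+1 x = jump_values n x || (B n.+1 == (B n).+1) && (x == B n + n).
Proof.
move=> n2; rewrite /jump_values /index_iota subSn // -[(n - 2).+1]addn1 iotaD.
by rewrite has_cat subnKC //= orbF.
Qed.

Record quet_inv n : Prop := QuetInv {
  inv_sum : sumn (quet_upto n) = n.-1 * B n;
  inv_B_lo : 2 <= B n;
  inv_B_hi : B n < n;
  inv_mem : forall x, (x \in quet_upto n) = (x < small_bound n) || jump_values n x;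
  inv_jump : forall x, jump_values n x -> x < B n + n }.

Lemma quet_inv5 : quet_inv 5.
Proof.
have [B2 B3 B4 B5] := quetB_init.
split; rewrite ?quet5 ?B5 //; last first.
- by move=> x; rewrite /jump_values /= B2 B3 B4 B5 /= orbF => /eqP ->.
- move=> x; rewrite /small_bound /jump_values /= B2 B3 B4 B5.
  by case: x => [|[|[|[|[|[|[|x]]]]]]].
Qed.

Lemma quet_succ_values n : 5 <= n -> quet_inv n ->
  quet_upto n.+1 =
    rcons (quet_upto n) (if B n \in quet_upto n then B n + n else B n) /\
  B n.+1 = B n + (B n \in quet_upto n).
Proof.
move=> n5 [Hsum Hlo Hhi Hmem Hjump].
have Hfree : B n + n \notin quet_upto n.
  rewrite Hmem negb_or /small_bound; apply/andP.
  by split; [lia | apply/negP => /Hjump; lia].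
have Hs : quet_upto n.+1 =
    rcons (quet_upto n) (if B n \in quet_upto n then B n + n else B n).
  by rewrite quet_upto_S 1?(quet_next_eq _ Hsum Hfree) //; lia.
split=> //; rewrite quetB_sum ?Hs ?sumn_rcons ?Hsum /=; last lia.
case: (B n \in quet_upto n) => /=.
- have -> : n.-1 * B n + (B n + n) = n * (B n + 1) by nia.
  by rewrite mulKn; lia.
- have -> : n.-1 * B n + B n = n * (B n + 0) by nia.
  by rewrite mulKn; lia.
Qed.

Lemma quet_inv_succ n : 5 <= n -> quet_inv n -> quet_inv n.+1.
Proof.
move=> n5 Hinv; have [Hs HB'] := quet_succ_values n5 Hinv.
case: Hinv => Hsum Hlo Hhi Hmem Hjump.
split.
- by rewrite Hs sumn_rcons Hsum HB' /=; case: (_ \in _) => /=; nia.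
- by rewrite HB'; lia.
- by rewrite HB'; case: (_ \in _) => /=; lia.
- move=> x; rewrite Hs mem_rcons in_cons (Hmem x) jump_values_S; last lia.
  rewrite /small_bound /= HB'.
  have := Hmem (B n); rewrite /small_bound.
  case: (B n \in quet_upto n) => /= HBin;
    by case: (eqVneq x (B n)) => [->|NxB]; apply/idP/idP; lia.
- move=> x; rewrite jump_values_S; last lia.
  by case/orP => [/Hjump|/andP [_ /eqP ->]]; rewrite HB'; lia.
Qed.

Lemma quet_inv_all n : 5 <= n -> quet_inv n.
Proof.
elim: n => [//|n IH]; rewrite leq_eqVlt => /orP [/eqP <-|n5]; first exact: quet_inv5.
exact: quet_inv_succ n5 (IH n5).
Qed.

Lemma quetB_rule n : 5 <= n ->
  B n.+1 = B n + ((B n == B n.-1) || jump_values n (B n)).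
Proof.
move=> n5; have [_ ->] := quet_succ_values n5 (quet_inv_all n5).
by rewrite (inv_mem (quet_inv_all n5)) /small_bound -[X in X < _]addn0 ltn_add2l lt0b.
Qed.

Lemma quetB_ge2 n : 2 <= n -> 2 <= B n.
Proof.
have [B2 B3 B4 _] := quetB_init.
move=> n2; have [n5|] := leqP 5 n; first exact: inv_B_lo (quet_inv_all n5).
by case: n n2 => [|[|[|[|[|n]]]]] //; rewrite ?B2 ?B3 ?B4.
Qed.

Definition quet_shift (m : nat) : nat := B m.+2 - 2.

Lemma quet_shiftE m : B m.+2 = quet_shift m + 2.
Proof. by rewrite /quet_shift subnK // quetB_ge2. Qed.

Lemma quet_shift_rule m : 3 <= m ->
  quet_shift m.+1 = quet_shift m + grows quet_shift m.
Proof.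
move=> m3; have := @quetB_rule m.+2 ltac:(lia).
have -> : B m.+2.-1 = quet_shift m.-1 + 2.
  by rewrite /= -{1}(ltn_predK m3) quet_shiftE.
have -> : jump_values m.+2 (B m.+2) =
    has (fun j => (quet_shift j.+1 == (quet_shift j).+1) &&
                  (quet_shift m == quet_shift j + j + 2)) (iota 0 m).
  rewrite /jump_values /index_iota subn2 /= (iotaDl 2 0 m) has_map.
  apply: eq_has => j /=; rewrite !add2n !quet_shiftE.
  by congr (_ && _); apply/eqP/eqP; lia.
by rewrite !quet_shiftE /grows; lia.
Qed.

Lemma quet_shift_eq_a m : quet_shift m = a m.
Proof.
have [B2 B3 B4 B5] := quetB_init.
apply: (@grows_uniq _ _ 3) => [i Hi|n n3|n n3].
- by case: i Hi => [|[|[|[|i]]]] //; rewrite /quet_shift ?B2 ?B3 ?B4 ?B5.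
- exact: quet_shift_rule.
- by apply: a_rule; lia.
Qed.

Theorem theorem10 : forall n : nat, 2 <= n -> quetB n = hof_a (n - 2) + 2.
Proof.
by case=> [|[|m]] // _; rewrite quet_shiftE quet_shift_eq_a subn2.
Qed.
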